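(* Consider the FedAvg round $t$ with coordinate-wise chip-diverse REED transmission (defined in the context) with deterministic weights $c_1,\dots,c_M\ge0$, $C_M=\sum_m c_m>0$, and assume $\|g_{k,q}^t\|\le G$ almost surely for all $k,q,t$. Suppose each client $k$ is subject to the per-round average energy constraint $$\frac1d\sum_{j=1}^d\sum_{m=1}^M\left(|a_{k,j,m,+}^t|^2+|a_{k,j,m,-}^t|^2\right)\le E_k,$$ with $E_k>0$. Then the deterministic choice $$\eta=\min_{k\in\{1,\dots,K\}}\frac{E_kK\sqrt d\,\mu_k^2}{C_M\beta QG}$$ satisfies all client energy constraints. Hence, for fixed system parameters ($K,d,Q,G,\sigma_z^2,\{E_k\},\{\mu_k\}$) and fixed chip weights, $\eta=\Theta(1/\beta)$, and both quantities $$\sigma_{\mathrm{air}}^2=(\beta QG)^2+\frac{2\sigma_z^2\sqrt d}{\eta}(\beta QG)+\frac{2d\sigma_z^4}{\eta^2}$$ (for $M=1$, $c_1=1$) and $$\sigma_{\mathrm{air}}^2=\frac{\sum_{m}c_m^2}{C_M^2}(\beta QG)^2+\frac{2\sigma_z^2\sqrt d}{\eta C_M}(\beta QG)+\frac{2dM\sigma_z^4}{\eta^2C_M^2}$$ satisfy $\sigma_{\mathrm{air}}^2=O(\beta^2)$ as $\beta\to0$.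
   Context: FedAvg setup: $K$ clients, model dimension $d$; at round $t$ each client starts from the global model $w^t$ and runs $Q$ local steps $w_{k,q+1}^t=w_{k,q}^t-\beta g_{k,q}^t$ with stepsize $\beta>0$ and stochastic gradients $g_{k,q}^t$; the local increment is $\Delta_k^t=-\beta\sum_{q=0}^{Q-1}g_{k,q}^t$. Coordinate-wise REED transmission: with $\eta>0$, average channel powers $\mu_k^2>0$, and $u_{k,j}^t=\frac1K[\Delta_k^t]_j$, client $k$ transmits on coordinate $j$, chip $m\in\{1,\dots,M\}$, branch $\pm$ the symbol $a_{k,j,m,\pm}^t=\frac{\sqrt{\eta c_m[u_{k,j}^t]_\pm}}{\mu_k}e^{\mathrm{i}\phi_{k,j,m,\pm}^t}$, where $[x]_+=\max\{x,0\}$, $[x]_-=\max\{-x,0\}$ and $\phi$ are phases. $\sigma_z^2>0$ is the receiver noise variance. *)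

From HB Require Import structures.
From mathcomp Require Import all_boot all_order all_algebra.
From mathcomp Require Import all_classical all_reals all_analysis.
Set Implicit Arguments. Unset Strict Implicit. Unset Printing Implicit Defensive.
Import Order.TTheory GRing.Theory Num.Theory.
Local Open Scope ring_scope.

Section REED.
Variable R : realType.

Definition posp (x : R) : R := Num.max x 0.
Definition negp (x : R) : R := Num.max (- x) 0.

Definition enorm (d : nat) (v : 'rV[R]_d) : R := Num.sqrt (\sum_(j < d) v ord0 j ^+ 2).

(* minimum of f over 'I_K (equals 0 by convention when K = 0) *)
Definition min_over (K : nat) (f : 'I_K -> R) : R :=
  match [seq f k | k <- enum 'I_K] with
  | [::] => 0
  | x :: s => foldr Num.min x s
  end.

Definition local_incr (K Q d : nat) (beta : R) (g : 'I_K -> 'I_Q -> 'rV[R]_d)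
  (k : 'I_K) : 'rV[R]_d := - (beta *: \sum_(q < Q) g k q).

Definition uval (K Q d : nat) (beta : R) (g : 'I_K -> 'I_Q -> 'rV[R]_d)
  (k : 'I_K) (j : 'I_d) : R := (local_incr beta g k) ord0 j / K%:R.

(* The complex REED symbol a = sqrt(eta c [u]_pm)/mu * e^{i phi},
   represented by its real and imaginary parts. *)
Definition reed_symbol (eta c mu x phi : R) : R * R :=
  (Num.sqrt (eta * c * x) / mu * cos phi, Num.sqrt (eta * c * x) / mu * sin phi).

Definition cmod2 (z : R * R) : R := z.1 ^+ 2 + z.2 ^+ 2.

Definition client_energy (K Q d M : nat) (eta beta : R) (c : 'I_M -> R)
  (mu : 'I_K -> R) (g : 'I_K -> 'I_Q -> 'rV[R]_d)
  (phip phim : 'I_K -> 'I_d -> 'I_M -> R) (k : 'I_K) : R :=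
  d%:R^-1 * \sum_(j < d) \sum_(m < M)
    (cmod2 (reed_symbol eta (c m) (mu k) (posp (uval beta g k j)) (phip k j m)) +
     cmod2 (reed_symbol eta (c m) (mu k) (negp (uval beta g k j)) (phim k j m))).

Definition eta_choice (K d Q : nat) (G CM beta : R) (E mu : 'I_K -> R) : R :=
  min_over (fun k => E k * K%:R * Num.sqrt d%:R * mu k ^+ 2 / (CM * beta * Q%:R * G)).

Definition sigma_air1 (d Q : nat) (G sz2 eta beta : R) : R :=
  (beta * Q%:R * G) ^+ 2 + 2 * sz2 * Num.sqrt d%:R / eta * (beta * Q%:R * G)
  + 2 * d%:R * sz2 ^+ 2 / eta ^+ 2.

Definition sigma_airM (d Q M : nat) (c : 'I_M -> R) (G sz2 eta beta : R) : R :=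
  let CM := \sum_(m < M) c m in
  (\sum_(m < M) c m ^+ 2) / CM ^+ 2 * (beta * Q%:R * G) ^+ 2
  + 2 * sz2 * Num.sqrt d%:R / (eta * CM) * (beta * Q%:R * G)
  + 2 * d%:R * M%:R * sz2 ^+ 2 / (eta ^+ 2 * CM ^+ 2).

End REED.

(* The filter "beta -> 0+" (right neighbourhoods of 0) packaged as a
   filter_on R, so that it can be used with the Landau notations. *)
Definition at_right0 (R : realType) : filter_on R :=
  FilterType (at_right (0 : R)) (at_right_proper_filter (0 : R)).

From HB Require Import structures.
From mathcomp Require Import all_boot all_order all_algebra.
From mathcomp Require Import all_classical all_reals all_analysis.
From mathcomp Require Import ring lra.
Import Order.TTheory GRing.Theory Num.Theory.
Local Open Scope classical_set_scope.
Local Open Scope ring_scope.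

(* Since |a_{k,j,m,+}|^2 + |a_{k,j,m,-}|^2 = eta c_m |u_{k,j}| / mu_k^2, the
   energy of client k is eta C_M ||u_k||_1 / (d mu_k^2), and by the triangle
   and Cauchy-Schwarz inequalities ||u_k||_1 <= beta Q sqrt(d) G / K; the
   prescribed eta is the largest value for which this bound stays within every
   client's budget.
   This eta is homogeneous of degree -1 in beta, eta(beta) = eta(1) / beta, and
   both expressions for sigma_air^2 are homogeneous of degree 2 in
   (beta, 1 / eta), so along this choice they equal their value at beta = 1
   times beta^2. *)

Section FoldrMin.
Context {disp : Order.disp_t} {T : orderType disp}.

Lemma foldr_min_mem (x : T) s : foldr Order.min x s \in x :: s.
Proof.
elim: s => [|y s IH] /=; first by rewrite mem_seq1.
rewrite !inE; case: leP => _; first by rewrite eqxx orbT.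
by move: IH; rewrite !inE => /orP[->|->]; rewrite ?orbT.
Qed.

Lemma foldr_min_le (x : T) s y : y \in x :: s -> (foldr Order.min x s <= y)%O.
Proof.
elim: s => [|z s IH]; first by rewrite mem_seq1 => /eqP ->.
rewrite /= ge_min !inE => /or3P[yx|/eqP->|ys].
- by rewrite IH ?orbT // inE yx.
- by rewrite lexx.
- by rewrite IH ?orbT // inE ys orbT.
Qed.

End FoldrMin.

Lemma foldr_min_mulr (R : realDomainType) (b x : R) s : 0 <= b ->
  foldr Num.min (x * b) [seq y * b | y <- s] = foldr Num.min x s * b.
Proof. by move=> b_ge0; elim: s => //= y s ->; rewrite minr_pMl. Qed.

Section MinOver.
Context {R : realType}.

Lemma min_over_le K (f : 'I_K -> R) k : min_over f <= f k.
Proof.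
rewrite /min_over.
have : f k \in [seq f k | k <- enum 'I_K] by rewrite map_f ?mem_enum.
by case: [seq _ | _ <- _] => // x s; apply: foldr_min_le.
Qed.

Lemma min_over_gt0 K (f : 'I_K -> R) :
  (0 < K)%N -> (forall k, 0 < f k) -> 0 < min_over f.
Proof.
move=> K_gt0 f_gt0; rewrite /min_over.
have : [seq f k | k <- enum 'I_K] != [::].
  by rewrite -size_eq0 size_map size_enum_ord -lt0n.
case: [seq _ | _ <- _] (fun y => @mapP _ _ f (enum 'I_K) y) => // x s memf _.
by have /memf[k _ ->] := foldr_min_mem x s.
Qed.

Lemma min_over_mulr K (f : 'I_K -> R) b : 0 <= b ->
  min_over (fun k => f k * b) = min_over f * b.
Proof.
move=> b_ge0; rewrite /min_over -[[seq f k * b | k <- _]]/(map (( *%R^~ b) \o f) _).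
by rewrite map_comp; case: [seq f k | k <- _] => [|x s] /=; rewrite ?mul0r ?foldr_min_mulr.
Qed.

End MinOver.

Section Landau.
Context {R : realType} {T : Type} {F : filter_on T}.

Lemma eqO_near_scale {f g : T -> R} (a : R) :
  (\forall x \near F, f x = a * g x) -> f =O_F g.
Proof.
move=> fE; apply/eqO_exP; exists (`|a| + 1); first by have := normr_ge0 a; lra.
by apply: filterS fE => x ->; rewrite normrM ler_wpM2r // lerDl.
Qed.

Lemma eqTheta_near_scale {f g : T -> R} {a : R} :
  0 < a -> (\forall x \near F, f x = a * g x) -> f =Theta_F g.
Proof.
move=> a_gt0 fE; rewrite eqThetaE qualifE; apply/asboolP.
exists (a, a) => /=; first by rewrite a_gt0.
by apply: filterS fE => x ->; rewrite normrM gtr0_norm.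
Qed.

End Landau.

Section Energy.
Context {R : realType}.

Lemma posp_ge0 (x : R) : 0 <= posp x.
Proof. by rewrite le_max lexx orbT. Qed.

Lemma negp_ge0 (x : R) : 0 <= negp x.
Proof. by rewrite le_max lexx orbT. Qed.

Lemma posp_add_negp (x : R) : posp x + negp x = `|x|.
Proof. by rewrite /posp /negp; case: (ger0P x) => x0; case: (ger0P (- x)) => nx0; lra. Qed.

Lemma cmod2_reed_symbol (eta c mu x phi : R) : 0 <= eta * c * x ->
  cmod2 (reed_symbol eta c mu x phi) = eta * c * x / mu ^+ 2.
Proof.
move=> ecx_ge0; rewrite /cmod2 /= !exprMn -mulrDr cos2Dsin2 mulr1.
by rewrite sqr_sqrtr // exprVn.
Qed.

Lemma sum_abs_le_sqrt_dim_enorm d (v : 'rV[R]_d) :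
  \sum_(j < d) `|v ord0 j| <= Num.sqrt d%:R * enorm v.
Proof.
rewrite /enorm -sqrtrM ?ler0n // -[leLHS]ger0_norm ?sumr_ge0 //.
rewrite -sqrtr_sqr ler_wsqrtr //.
have amgm i j : `|v ord0 i| * `|v ord0 j| <= (v ord0 i ^+ 2 + v ord0 j ^+ 2) / 2.
  rewrite -[v ord0 i ^+ 2]real_normK ?num_real // -[v ord0 j ^+ 2]real_normK ?num_real //.
  by have := sqr_ge0 (`|v ord0 i| - `|v ord0 j|); lra.
pose a i := v ord0 i ^+ 2.
have sum_amgm : \sum_(i < d) \sum_(j < d) (a i + a j) / 2 = d%:R * \sum_(j < d) a j.
  under eq_bigr do rewrite -mulr_suml big_split /= sumr_const card_ord.
  by rewrite -mulr_suml big_split /= sumr_const card_ord !sumrMnl -mulr_natl; field.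
rewrite -sum_amgm expr2 mulr_suml.
by apply: ler_sum => i _; rewrite mulr_sumr; apply: ler_sum => j _; apply: amgm.
Qed.

Section ClientEnergy.
Context {K Q d M : nat} {eta beta : R} {c : 'I_M -> R} {mu : 'I_K -> R}.
Context {g : 'I_K -> 'I_Q -> 'rV[R]_d} {phip phim : 'I_K -> 'I_d -> 'I_M -> R}.
Context {k : 'I_K}.
Hypotheses (eta_ge0 : 0 <= eta) (c_ge0 : forall m, 0 <= c m).

Lemma client_energyE : client_energy eta beta c mu g phip phim k =
  eta * (\sum_(m < M) c m) / (d%:R * mu k ^+ 2) * \sum_(j < d) `|uval beta g k j|.
Proof.
have chip_sum j : \sum_(m < M)
    (cmod2 (reed_symbol eta (c m) (mu k) (posp (uval beta g k j)) (phip k j m)) +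
     cmod2 (reed_symbol eta (c m) (mu k) (negp (uval beta g k j)) (phim k j m)))
  = eta * (\sum_(m < M) c m) / mu k ^+ 2 * `|uval beta g k j|.
  set u := uval beta g k j; rewrite -posp_add_negp.
  transitivity (\sum_(m < M) c m * (eta * (posp u + negp u) / mu k ^+ 2)).
    apply: eq_bigr => m _.
    by rewrite !cmod2_reed_symbol ?mulr_ge0 ?posp_ge0 ?negp_ge0 //; ring.
  by rewrite -mulr_suml; ring.
by rewrite /client_energy (eq_bigr _ (fun j _ => chip_sum j)) -mulr_sumr (invfM d%:R); ring.
Qed.

Lemma sum_abs_uval_le G : 0 <= beta -> (forall q, enorm (g k q) <= G) ->
  \sum_(j < d) `|uval beta g k j| <= beta * Q%:R * Num.sqrt d%:R * G / K%:R.
Proof.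
move=> beta_ge0 g_le.
have uvalE j : `|uval beta g k j| = beta / K%:R * `|\sum_(q < Q) g k q ord0 j|.
  rewrite /uval /local_incr !mxE summxE normrM normrN normrM normfV.
  by rewrite (ger0_norm beta_ge0) normr_nat mulrAC.
under eq_bigr do rewrite uvalE.
rewrite -mulr_sumr [leRHS](_ : _ = beta / K%:R * (Q%:R * (Num.sqrt d%:R * G))); last by ring.
apply: ler_wpM2l; first by rewrite divr_ge0.
apply: (@le_trans _ _ (\sum_(q < Q) \sum_(j < d) `|g k q ord0 j|)).
  by rewrite exchange_big; apply: ler_sum => j _; apply: ler_norm_sum.
apply: (@le_trans _ _ (\sum_(q < Q) Num.sqrt d%:R * G)).
  apply: ler_sum => q _.
  apply: le_trans (sum_abs_le_sqrt_dim_enorm _ (g k q)) _.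
  by apply: ler_wpM2l; [apply: sqrtr_ge0 | apply: g_le].
by rewrite sumr_const card_ord mulr_natl.
Qed.

Lemma client_energy_le_budget {E G : R} :
  (0 < d)%N -> (0 < Q)%N -> 0 < G -> 0 < beta -> 0 < mu k -> 0 < \sum_(m < M) c m ->
  (forall q, enorm (g k q) <= G) ->
  eta <= E * K%:R * Num.sqrt d%:R * mu k ^+ 2 / ((\sum_(m < M) c m) * beta * Q%:R * G) ->
  client_energy eta beta c mu g phip phim k <= E.
Proof.
move=> d_gt0 Q_gt0 G_gt0 beta_gt0 mu_gt0 CM_gt0 g_le eta_le.
have K_gt0 : (0 < K)%N := leq_ltn_trans (leq0n k) (ltn_ord k).
set CM := \sum_(m < M) c m in CM_gt0 eta_le *.
set s := Num.sqrt d%:R in eta_le *.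
have s_gt0 : 0 < s by rewrite sqrtr_gt0 ltr0n.
have d_sqr : d%:R = s ^+ 2 by rewrite sqr_sqrtr ?ler0n.
have coef_ge0 : 0 <= eta * CM / (d%:R * mu k ^+ 2).
  by rewrite divr_ge0 ?mulr_ge0 ?sqr_ge0 ?ler0n // ltW.
rewrite client_energyE.
apply: (@le_trans _ _ (eta * CM / (d%:R * mu k ^+ 2) * (beta * Q%:R * s * G / K%:R))).
  by apply: ler_wpM2l => //; apply: sum_abs_uval_le => //; apply: ltW.
rewrite [leLHS](_ : _ = eta * (CM * beta * Q%:R * G / (K%:R * s * mu k ^+ 2))); last first.
  by rewrite -/s d_sqr; field; rewrite !gt_eqF ?ltr0n.
rewrite -ler_pdivlMr ?divr_gt0 ?mulr_gt0 ?ltr0n // invf_div.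
by rewrite [leRHS](_ : _ = E * K%:R * s * mu k ^+ 2 / (CM * beta * Q%:R * G)) //; ring.
Qed.

End ClientEnergy.
End Energy.

Section EtaChoice.
Context {R : realType} {K d Q : nat} {G CM : R} {E mu : 'I_K -> R}.

Lemma eta_choiceE beta : 0 <= beta ->
  eta_choice d Q G CM beta E mu = eta_choice d Q G CM 1 E mu / beta.
Proof.
move=> beta_ge0; rewrite /eta_choice -min_over_mulr ?invr_ge0 //.
by congr min_over; apply: funext => k; rewrite mulr1 !invfM; ring.
Qed.

Lemma eta_choice_near0 : \forall beta \near at_right0 R,
  eta_choice d Q G CM beta E mu = eta_choice d Q G CM 1 E mu / beta.
Proof. by apply: filterS (nbhs_right_gt 0) => beta /ltW /eta_choiceE. Qed.

Lemma homogeneous_eta_choice_eqO_sqr (h : R -> R -> R) :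
  (forall kappa beta, h (kappa / beta) beta = h kappa 1 * beta ^+ 2) ->
  (fun beta => h (eta_choice d Q G CM beta E mu) beta) =O_ (at_right0 R) (fun beta => beta ^+ 2).
Proof.
move=> h_hom; apply: (eqO_near_scale (h (eta_choice d Q G CM 1 E mu) 1)).
by apply: filterS eta_choice_near0 => beta ->.
Qed.

Lemma eta_choice_gt0 beta :
  (0 < K)%N -> (0 < d)%N -> (0 < Q)%N -> 0 < G -> 0 < CM ->
  (forall k, 0 < E k) -> (forall k, 0 < mu k) -> 0 < beta ->
  0 < eta_choice d Q G CM beta E mu.
Proof.
move=> K_gt0 d_gt0 Q_gt0 G_gt0 CM_gt0 E_gt0 mu_gt0 beta_gt0.
apply: min_over_gt0 => // k.
by rewrite divr_gt0 ?mulr_gt0 ?sqrtr_gt0 ?exprn_gt0 ?ltr0n.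
Qed.

End EtaChoice.

Section SigmaAir.
Context {R : realType}.
Variables (d Q : nat) (G sz2 : R).

Lemma sigma_air1_inv_eta kappa beta :
  sigma_air1 d Q G sz2 (kappa / beta) beta = sigma_air1 d Q G sz2 kappa 1 * beta ^+ 2.
Proof. by rewrite /sigma_air1 !(exprMn, invfM, exprVn, invrK); ring. Qed.

Lemma sigma_airM_inv_eta {M} (c : 'I_M -> R) kappa beta :
  sigma_airM d Q c G sz2 (kappa / beta) beta = sigma_airM d Q c G sz2 kappa 1 * beta ^+ 2.
Proof. by rewrite /sigma_airM !(exprMn, invfM, exprVn, invrK); ring. Qed.

End SigmaAir.

Theorem lemma2 (R : realType) (K d Q M : nat) (G sz2 : R)
  (E mu : 'I_K -> R) (c : 'I_M -> R) :
  (0 < K)%N -> (0 < d)%N -> (0 < Q)%N -> (0 < M)%N ->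
  0 < G -> 0 < sz2 ->
  (forall k, 0 < E k) -> (forall k, 0 < mu k) ->
  (forall m, 0 <= c m) -> 0 < \sum_(m < M) c m ->
  (* (i) the choice of eta satisfies every client's energy constraint *)
  (forall (beta : R), 0 < beta ->
   forall (g : 'I_K -> 'I_Q -> 'rV[R]_d),
   (forall k q, enorm (g k q) <= G) ->
   forall (phip phim : 'I_K -> 'I_d -> 'I_M -> R) (k : 'I_K),
   client_energy (eta_choice d Q G (\sum_(m < M) c m) beta E mu) beta c mu g
     phip phim k <= E k)
  /\
  (* (ii) eta = Theta(1/beta) as beta -> 0+ *)
  (fun beta : R => eta_choice d Q G (\sum_(m < M) c m) beta E mu)
    =Theta_ (at_right0 R) (fun beta : R => beta^-1)
  /\
  (* (iii) sigma_air^2 = O(beta^2) as beta -> 0+, for M = 1, c_1 = 1 *)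
  (fun beta : R => sigma_air1 d Q G sz2 (eta_choice d Q G 1 beta E mu) beta)
    =O_ (at_right0 R) (fun beta : R => beta ^+ 2)
  /\
  (* (iv) and for the general chip weights *)
  (fun beta : R =>
     sigma_airM d Q c G sz2 (eta_choice d Q G (\sum_(m < M) c m) beta E mu) beta)
    =O_ (at_right0 R) (fun beta : R => beta ^+ 2).
Proof.
move=> K_gt0 d_gt0 Q_gt0 _ G_gt0 _ E_gt0 mu_gt0 c_ge0 CM_gt0.
have eta_gt0 CM beta : 0 < CM -> 0 < beta -> 0 < eta_choice d Q G CM beta E mu.
  by move=> *; apply: eta_choice_gt0.
split; [|split; [|split]].
- move=> beta beta_gt0 g g_le phip phim k.
  have eta_ge0 := ltW (eta_gt0 _ _ CM_gt0 beta_gt0).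
  apply: (client_energy_le_budget eta_ge0 c_ge0 d_gt0 Q_gt0 G_gt0 beta_gt0
    (mu_gt0 k) CM_gt0 (g_le k)).
  exact: min_over_le.
- exact: eqTheta_near_scale (eta_gt0 _ _ CM_gt0 ltr01) eta_choice_near0.
- exact: homogeneous_eta_choice_eqO_sqr (sigma_air1_inv_eta d Q G sz2).
- exact: homogeneous_eta_choice_eqO_sqr (sigma_airM_inv_eta d Q G sz2 c).
Qed.
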